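(* Assume (A1)–(A3). If $m_2<0$, then for every $k\ge0$ there exist $\tilde C>0$ and $\tilde\delta>0$ such that for all $i\ge k_0$, $j\in\{0,\dots,k_0-1\}$ and $\ell\ge0$, \[\mathbb P_{(i,j)}\bigl(Y(T^k)=\ell,\ T^k<\tau\bigr)\le\tilde C\exp(-\tilde\delta(i+\ell)),\] where $T^k=\inf\{n>0: X(n)\le\max(k_0-1,k)\}$ and $\tau=\inf\{n>0: Y(n)<k_0\}$.
   Context: Let $\mathbb N=\{0,1,2,\dots\}$ and fix an integer $k_0\ge1$. Let $\mu$, $\mu'_j$ ($0\le j<k_0$), $\mu''_i$ ($0\le i<k_0$), $\mu_{ij}$ ($0\le i,j<k_0$) be probability measures on $\mathbb Z^2$. The random walk $Z=(X(n),Y(n))$ on $\mathbb N^2$ has transition probabilities $p((i,j)\to(i',j'))$ equal to $\mu(i'-i,j'-j)$ if $i,j\ge k_0$; $\mu'_j(i'-i,j'-j)$ if $i\ge k_0$, $0\le j<k_0$; $\mu''_i(i'-i,j'-j)$ if $0\le i<k_0$, $j\ge k_0$; $\mu_{ij}(i'-i,j'-j)$ if $0\le i,j<k_0$; $\mathbb P_{(i,j)}$ is its law from $(i,j)$. Assumptions: (A1) $\mu(a,b)=0$ if $a<-k_0$ or $b<-k_0$; $\mu'_j(a,b)=0$ if $a<-k_0$ or $b<-j$; $\mu''_i(a,b)=0$ if $b<-k_0$ or $a<-i$; $\mu_{ij}(a,b)=0$ if $a<-i$ or $b<-j$. (A2) There are $\delta,\gamma,C>0$ with $\sup_{(i,j)\in\mathbb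 N^2}\mathbb E_{(i,j)}[\exp(\delta(X(1)-i)+\gamma(Y(1)-j))]\le C$. (A3) The random walk $Z_0$ on $\mathbb Z^2$ with increment law $\mu$, the chain $Z_1$ on $\mathbb N\times\mathbb Z$ (transitions $\mu$ for first coordinate $\ge k_0$, $\mu''_i$ for first coordinate $i<k_0$), the chain $Z_2$ on $\mathbb Z\times\mathbb N$ (transitions $\mu$ for second coordinate $\ge k_0$, $\mu'_j$ for second coordinate $j<k_0$), and $Z$ are irreducible on their state spaces. $m_2=\sum_{(a,b)}b\mu(a,b)$. *)

From HB Require Import structures.
From mathcomp Require Import all_boot all_order all_algebra.
From mathcomp Require Import all_classical all_reals all_analysis.
From Stdlib Require Import Relations.
Set Implicit Arguments. Unset Strict Implicit. Unset Printing Implicit Defensive.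
Import Order.TTheory GRing.Theory Num.Theory.
Local Open Scope classical_set_scope.
Local Open Scope ring_scope.

Section Defs.
Variable R : realType.

Definition is_prob_Z2 (m : int * int -> R) : Prop :=
  (forall d, 0 <= m d) /\ (\esum_(d in [set: int * int]) (m d)%:E = 1%E).

Definition kernelZ (k0 : nat) (mu : int * int -> R) (mu' mu'' : nat -> int * int -> R)
  (mu2 : nat -> nat -> int * int -> R) (z w : nat * nat) : R :=
  let d := ((w.1%:Z - z.1%:Z)%R, (w.2%:Z - z.2%:Z)%R) in
  if (k0 <= z.1)%N && (k0 <= z.2)%N then mu d
  else if (k0 <= z.1)%N then mu' z.2 d
  else if (k0 <= z.2)%N then mu'' z.1 d
  else mu2 z.1 z.2 d.

Definition kernelZ0 (mu : int * int -> R) (z w : int * int) : R :=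
  mu (w.1 - z.1, w.2 - z.2).

Definition kernelZ1 (k0 : nat) (mu : int * int -> R) (mu'' : nat -> int * int -> R)
  (z w : nat * int) : R :=
  let d := ((w.1%:Z - z.1%:Z)%R, w.2 - z.2) in
  if (k0 <= z.1)%N then mu d else mu'' z.1 d.

Definition kernelZ2 (k0 : nat) (mu : int * int -> R) (mu' : nat -> int * int -> R)
  (z w : int * nat) : R :=
  let d := (w.1 - z.1, (w.2%:Z - z.2%:Z)%R) in
  if (k0 <= z.2)%N then mu d else mu' z.2 d.

Definition irreducible (S : Type) (P : S -> S -> R) : Prop :=
  forall s t : S, clos_refl_trans S (fun a b => 0 < P a b) s t.

(* Taboo transition probabilities: [taboo P A n z w] is the probability,
   starting from z, of being at w at time n+1 while the states visited at
   times 1..n all lie in A. *)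
Fixpoint taboo (S : choiceType) (P : S -> S -> R) (A : set S) (n : nat)
  (z w : S) : \bar R :=
  match n with
  | 0 => (P z w)%:E
  | n'.+1 => \esum_(u in A) ((P z u)%:E * taboo P A n' u w)%E
  end.

(* Probability, from z, that the first time n > 0 at which the chain leaves
   A, it is in the set B (B is meant to be disjoint from A). *)
Definition exit_into (S : choiceType) (P : S -> S -> R) (A B : set S) (z : S)
  : \bar R :=
  \esum_(n in [set: nat]) \esum_(w in B) taboo P A n z w.

(* P_{(i,j)}( Y(T^k) = l, T^k < tau ) with
   T^k = inf{n>0 : X(n) <= max(k0-1,k)}, tau = inf{n>0 : Y(n) < k0}:
   the chain stays in {X > K, Y >= k0} at times 1..T^k - 1 and at time T^k
   satisfies X <= K, Y = l, Y >= k0. *)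
Definition prob_YT_lt_tau (k0 : nat) (P : nat * nat -> nat * nat -> R)
  (k : nat) (z : nat * nat) (l : nat) : \bar R :=
  let K := maxn (k0.-1) k in
  exit_into P [set w | (K < w.1)%N /\ (k0 <= w.2)%N]
              [set w | (w.1 <= K)%N /\ w.2 = l /\ (k0 <= w.2)%N] z.

Definition mean2 (mu : int * int -> R) : \bar R :=
  let pos := \esum_(d in [set d : int * int | (0 < d.2)%R]) (d.2%:~R * mu d)%:E in
  let neg := \esum_(d in [set d : int * int | (d.2 < 0)%R]) ((- d.2)%:~R * mu d)%:E in
  (pos - neg)%E.

End Defs.

From HB Require Import structures.
From mathcomp Require Import all_boot all_order all_algebra.
From mathcomp Require Import all_classical all_reals all_analysis.
From Stdlib Require Import Relations.
From mathcomp Require Import ring lra zify.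
Import Order.TTheory GRing.Theory Num.Theory.
Local Open Scope classical_set_scope.
Local Open Scope ring_scope.
Set Implicit Arguments. Unset Strict Implicit. Unset Printing Implicit Defensive.

(* A Foster-Lyapunov argument.  Since m_2 < 0 and the jumps of Y have an
   exponential moment, a Taylor expansion gives b > 0 with
   E_mu[exp(b dY)] <= 1 - eta < 1.  As the jumps of X are bounded below by
   -k0, the function h(x, y) = exp(-a (x - K) + b (y - l)) with a k0 = eta is
   superharmonic for the chain in the quadrant {x > K, y >= k0}, and h >= 1 at
   every state with x <= K and y = l.  Hence the probability of exiting the
   quadrant at such a state is at most (P h)(i, j), which by (A2) is
   O(h(i, j)) = O(exp(-a i - b l)). *)

Section NonnegEsum.
Variable R : realType.
Local Open Scope ereal_scope.

Lemma esumZl (T : choiceType) (I : set T) (c : R) (a : T -> \bar R) :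
  (0 <= c)%R -> (forall i, 0 <= a i) ->
  \esum_(i in I) (c%:E * a i) = c%:E * \esum_(i in I) a i.
Proof.
move=> c0 a0; rewrite /esum -ereal_supZl //; last first.
  by apply/set0P; exists 0; exists set0; [exact: fsets_set0|rewrite fsbig_set0].
congr ereal_sup; apply/seteqP; split => x /=.
  move=> [X [finX XI] <-]; exists (\sum_(i \in X) a i); first by exists X.
  by rewrite ge0_mule_fsumr.
move=> [y [X [finX XI] <-] <-]; exists X => //.
by rewrite ge0_mule_fsumr.
Qed.

Lemma exchange_esum (T1 T2 : choiceType) (I : set T1) (J : set T2)
    (a : T1 -> T2 -> \bar R) : (forall i j, I i -> J j -> 0 <= a i j) ->
  \esum_(i in I) \esum_(j in J) a i j = \esum_(j in J) \esum_(i in I) a i j.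
Proof.
move=> a0; rewrite (esum_esum (J := fun _ => J))//.
rewrite (esum_esum (J := fun _ => I)); last by move=> j i Jj Ii; apply: a0.
rewrite (reindex_esum (J `*`` fun=> I) (I `*`` fun=> J) (fun x => (x.2, x.1)))//.
split=> //=.
- by move=> [i j] [/= ? ?].
- by move=> [i1 i2] [j1 j2] /= _ _ [] -> ->.
- by move=> [i1 i2] [/= ? ?]; exists (i2, i1).
Qed.

Lemma esum_le_setT (T : choiceType) (I : set T) (a : T -> \bar R) :
  (forall i, 0 <= a i) -> \esum_(i in I) a i <= \esum_(i in [set: T]) a i.
Proof. by move=> a0; rewrite esum_mkcond; apply: le_esum => i _; case: ifP. Qed.

Lemma esumU_le_setT (T : choiceType) (A B : set T) (a : T -> \bar R) :
  (forall i, 0 <= a i) -> (forall i, A i -> ~ B i) ->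
  \esum_(i in A) a i + \esum_(i in B) a i <= \esum_(i in [set: T]) a i.
Proof.
move=> a0 dAB; rewrite (esum_mkcond A) (esum_mkcond B) -esumD; last 2 first.
- by move=> i _; case: ifP.
- by move=> i _; case: ifP.
apply: le_esum => i _; case: ifPn => iA; case: ifPn => iB.
- by exfalso; apply: (dAB i); apply/set_mem.
- by rewrite adde0.
- by rewrite add0e.
- by rewrite adde0.
Qed.

End NonnegEsum.

Section ExitIntoSuperharmonic.
Variables (R : realType) (S : choiceType) (P : S -> S -> R) (A B : set S).
Hypothesis P_ge0 : forall u w, (0 <= P u w)%R.
Local Open Scope ereal_scope.

Lemma taboo_ge0 n z w : 0 <= taboo P A n z w.
Proof.
elim: n z w => [|n IH] z w /=; first by rewrite lee_fin.
by apply: esum_ge0 => u _; apply: mule_ge0; rewrite ?lee_fin.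
Qed.

Variable h : S -> R.
Hypothesis h_ge0 : forall w, (0 <= h w)%R.

Let Ph u := \esum_(w in [set: S]) (P u w * h w)%:E.

Definition taboo_exit_weight n u := \esum_(w in B) (taboo P A n u w * (h w)%:E).

Let taboo_exit_weight_ge0 n u : 0 <= taboo_exit_weight n u.
Proof. by apply: esum_ge0 => w _; rewrite mule_ge0 ?lee_fin ?taboo_ge0. Qed.

Lemma taboo_exit_weightS n u :
  taboo_exit_weight n.+1 u = \esum_(v in A) ((P u v)%:E * taboo_exit_weight n v).
Proof.
rewrite /taboo_exit_weight /=.
transitivity (\esum_(w in B) \esum_(v in A)
    ((P u v)%:E * (taboo P A n v w * (h w)%:E))).
  apply: eq_esum => w _; rewrite muleC -esumZl//; last first.
    by move=> v; rewrite mule_ge0 ?lee_fin ?taboo_ge0.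
  by apply: eq_esum => v _; rewrite muleC muleA.
rewrite exchange_esum; last by move=> *; rewrite !mule_ge0 ?lee_fin ?taboo_ge0.
by apply: eq_esum => v _; rewrite esumZl// => w; rewrite mule_ge0 ?lee_fin ?taboo_ge0.
Qed.

Hypothesis h_ge1 : forall w, B w -> (1 <= h w)%R.
Hypothesis AB_disj : forall w, A w -> ~ B w.
Hypothesis h_superharmonic : forall u, A u -> Ph u <= (h u)%:E.

Let partial_weight N u := \sum_(0 <= n < N) taboo_exit_weight n u.

(* Exiting into [B] at the first step and moving on inside [A] are disjoint,
   so the two contributions add up to at most [Ph u]. *)
Let partial_weightS_le N u :
  (forall v, A v -> partial_weight N v <= (h v)%:E) -> partial_weight N.+1 u <= Ph u.
Proof.
move=> IH; rewrite /partial_weight big_nat_recl//.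
under eq_bigr do rewrite taboo_exit_weightS.
rewrite -esum_sum; last by move=> v n _ _; rewrite mule_ge0 ?lee_fin.
apply: (le_trans _ (esumU_le_setT _ AB_disj)); last first.
  by move=> w; rewrite lee_fin mulr_ge0.
rewrite addeC; apply: leeD.
  apply: le_esum => v Av; rewrite -ge0_sume_distrr// EFinM.
  by apply: lee_wpmul2l; rewrite ?lee_fin// IH.
by apply: le_esum => w _ /=; rewrite EFinM.
Qed.

Let partial_weight_le_h N u : A u -> partial_weight N u <= (h u)%:E.
Proof.
elim: N u => [|N IH] u Au; first by rewrite /partial_weight big_geq// lee_fin.
exact: le_trans (partial_weightS_le u IH) (h_superharmonic Au).
Qed.

Lemma exit_into_le_superharmonic z : exit_into P A B z <= Ph z.
Proof.
apply: (@le_trans _ _ (\esum_(n in [set: nat]) taboo_exit_weight n z)).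
  apply: le_esum => n _; apply: le_esum => w Bw.
  by rewrite lee_pemulr ?lee_fin ?taboo_ge0 ?h_ge1.
rewrite -nneseries_esumT//; apply: lime_le; first exact: is_cvg_nneseries.
apply: nearW => -[|N]; last exact: partial_weightS_le (partial_weight_le_h N).
by rewrite /partial_weight big_geq// esum_ge0// => w _; rewrite lee_fin mulr_ge0.
Qed.

End ExitIntoSuperharmonic.

Section RealValuedEsum.
Variable R : realType.

Lemma esumDZl (T : choiceType) (I : set T) (c : R) (a b : T -> R) :
  0 <= c -> (forall i, 0 <= a i) -> (forall i, 0 <= b i) ->
  (\esum_(i in I) (a i + c * b i)%:E =
   \esum_(i in I) (a i)%:E + c%:E * \esum_(i in I) (b i)%:E)%E.
Proof.
move=> c0 a0 b0; under eq_esum do rewrite EFinD EFinM.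
by rewrite esumD ?esumZl// => i; rewrite ?mule_ge0 ?lee_fin.
Qed.

Lemma esum_mkcondR (T : choiceType) (p : pred T) (f : T -> R) :
  \esum_(x in [set x | p x]) (f x)%:E =
  \esum_(x in [set: T]) (if p x then f x else 0)%:E.
Proof.
rewrite esum_mkcond; apply: eq_esum => x _.
suff -> : (x \in [set x | p x]) = p x by case: (p x).
by apply/idP/idP => [/set_mem|/mem_set].
Qed.

Lemma esum_nat2_shift (F : int * int -> \bar R) (v : nat * nat) :
  (forall d, (0 <= F d)%E) -> (forall d, d.1 < - v.1%:Z \/ d.2 < - v.2%:Z -> F d = 0%E) ->
  \esum_(w in [set: nat * nat]) F (w.1%:Z - v.1%:Z, w.2%:Z - v.2%:Z) =
  \esum_(d in [set: int * int]) F d.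
Proof.
move=> F_ge0 F_supp; set Q := [set d : int * int | - v.1%:Z <= d.1 /\ - v.2%:Z <= d.2].
rewrite (esumID Q)// [X in (_ + X)%E]esum1 ?adde0 ?setTI; last first.
  move=> d /= notQ; apply: F_supp.
  have [|d1v] := ltP d.1 (- v.1%:Z); [by left|right].
  by rewrite ltNge; apply/negP => d2v; apply: notQ.
rewrite (reindex_esum [set: nat * nat] Q (fun w => (w.1%:Z - v.1%:Z, w.2%:Z - v.2%:Z)))//.
split=> [[w1 w2] _ /=|[w1 w2] [x1 x2] _ _ /= [e1 e2]|[d1 d2] [/= d1v d2v]].
- by rewrite /Q /=; split; lia.
- by congr pair; lia.
- by exists (absz (d1 + v.1%:Z), absz (d2 + v.2%:Z)) => //=; congr pair; lia.
Qed.

End RealValuedEsum.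

Section ExpInequalities.
Variable R : realType.
Implicit Types x y t g : R.

Lemma expR_mul1B_le1 x : expR x * (1 - x) <= 1.
Proof.
have := expR_ge1Dx (- x); have := expR_ge0 x.
have : expR x * expR (- x) = 1 by rewrite -expRD subrr expR0.
nra.
Qed.

Lemma expRN_le_quadratic x : 0 <= x -> expR (- x) <= 1 - x + x ^+ 2.
Proof.
move=> x0; have := expR_mul1B_le1 (- x); have := expR_ge1Dx (- x).
have := expR_ge0 (- x); rewrite opprK; nra.
Qed.

Lemma expR_le_quadratic y : 0 <= y -> expR y <= 1 + y + y ^+ 2 * expR y.
Proof. by move=> y0; have := expR_mul1B_le1 y; have := expR_ge0 y; nra. Qed.

(* From [expR s >= s] at [s = g t / 4], squared. *)
Lemma sqr_le_expR t g : 0 <= t -> 0 < g -> t ^+ 2 <= 16 / g ^+ 2 * expR (g * t / 2).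
Proof.
move=> t0 g0; have := expR_ge1Dx (g * t / 4).
have -> : expR (g * t / 2) = expR (g * t / 4) ^+ 2.
  by rewrite expr2 -expRD; congr expR; field.
set E := expR (g * t / 4) => hE.
have -> : t ^+ 2 = 16 / g ^+ 2 * (g * t / 4) ^+ 2 by field; rewrite gt_eqF.
rewrite ler_wpM2l ?divr_ge0 ?exprn_ge0 ?ltW//.
have : 0 <= g * t / 4 by rewrite divr_ge0 ?mulr_ge0 // ltW.
nra.
Qed.

Lemma expR_second_order_le (k g b t : R) : 0 < g -> 0 < b -> b <= g / 2 -> - k <= t ->
  expR (b * t) + b * (if t < 0 then - t else 0) <=
  1 + b * (if 0 < t then t else 0) + b ^+ 2 * (k ^+ 2 + 16 / g ^+ 2 * expR (g * t)).
Proof.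
move=> g0 b0 bg kt.
have c16 : 0 <= 16 / g ^+ 2 by rewrite divr_ge0 ?exprn_ge0 ?ltW.
case: ltrgtP => [t0|t0|->]; last first.
- rewrite !mulr0 expR0 /=; have := mulr_ge0 (sqr_ge0 b) c16; nra.
- have -> : expR (g * t) = expR (g * t / 2) ^+ 2.
    by rewrite expr2 -expRD; congr expR; field.
  set E := expR (g * t / 2).
  have eb : expR (b * t) <= E by rewrite ler_expR; nra.
  have sq : (b * t) ^+ 2 * expR (b * t) <= b ^+ 2 * (16 / g ^+ 2 * E ^+ 2).
    rewrite exprMn -[_ * _ * expR _]mulrA; apply: ler_wpM2l; first exact: sqr_ge0.
    rewrite expr2 mulrA; apply: ler_pM; rewrite ?sqr_ge0 ?expR_ge0 //.
    exact: sqr_le_expR (ltW t0) g0.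
  have := expR_le_quadratic (ltW (mulr_gt0 b0 t0)).
  have : 0 <= b ^+ 2 * k ^+ 2 by rewrite mulr_ge0 ?sqr_ge0.
  lra.
- have bt0 : 0 <= b * - t by rewrite mulr_ge0 ?oppr_ge0 ?ltW.
  have : (b * - t) ^+ 2 <= b ^+ 2 * k ^+ 2.
    by rewrite exprMn ler_wpM2l ?sqr_ge0 // sqrrN; nra.
  have := mulr_ge0 (mulr_ge0 (sqr_ge0 b) c16) (expR_ge0 (g * t)).
  have := expRN_le_quadratic bt0; rewrite mulrN opprK; lra.
Qed.

End ExpInequalities.

Definition mgf2 (R : realType) (mu : int * int -> R) (b : R) : \bar R :=
  \esum_(d in [set: int * int]) (mu d * expR (b * d.2%:~R))%:E.

Definition mean2_pos (R : realType) (mu : int * int -> R) : \bar R :=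
  \esum_(d in [set d : int * int | 0 < d.2]) (d.2%:~R * mu d)%:E.

Definition mean2_neg (R : realType) (mu : int * int -> R) : \bar R :=
  \esum_(d in [set d : int * int | d.2 < 0]) ((- d.2)%:~R * mu d)%:E.

Section SecondCoordinateMgf.
Variables (R : realType) (mu : int * int -> R) (k : nat) (g M : R).
Hypothesis mu_prob : is_prob_Z2 mu.
Hypothesis jump2_ge : forall d, d.2 < - k%:Z -> mu d = 0.
Hypothesis g_gt0 : 0 < g.
Hypothesis mgf2_g_le : (mgf2 mu g <= M%:E)%E.

Let mu_ge0 d : 0 <= mu d := mu_prob.1 d.

Let jump2_ge_nz d : mu d != 0 -> - k%:R <= d.2%:~R :> R.
Proof.
apply: contraNT; rewrite -ltNge => lt; apply/eqP/jump2_ge.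
by rewrite -(ltr_int R) mulrNz.
Qed.

Lemma mean2_neg_le : (mean2_neg mu <= k%:R%:E)%E.
Proof.
apply: (@le_trans _ _ (\esum_(d in [set d : int * int | d.2 < 0]) (k%:R * mu d)%:E)).
  apply: le_esum => d _; rewrite lee_fin.
  have [->|/jump2_ge_nz] := eqVneq (mu d) 0; first by rewrite !mulr0.
  by rewrite mulrNz lerNl => ?; apply: ler_wpM2r.
apply: le_trans (esum_le_setT _ _) _ => [d|]; first by rewrite lee_fin mulr_ge0.
by under eq_esum do rewrite EFinM; rewrite esumZl// mu_prob.2 mule1.
Qed.

Lemma mean2_pos_le : (mean2_pos mu <= (g^-1 * M)%:E)%E.
Proof.
apply: (@le_trans _ _ (\esum_(d in [set d : int * int | 0 < d.2])
    (g^-1 * (mu d * expR (g * d.2%:~R)))%:E)).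
  apply: le_esum => d _; rewrite lee_fin mulrCA [_ * mu d]mulrC ler_wpM2l//.
  rewrite -(ler_pM2l g_gt0) mulrA mulfV ?gt_eqF// mul1r.
  by have := expR_ge1Dx (g * d.2%:~R); lra.
apply: le_trans (esum_le_setT _ _) _ => [d|].
  by rewrite lee_fin mulr_ge0 ?invr_ge0 ?mulr_ge0 ?expR_ge0 ?mu_ge0 ?(ltW g_gt0).
under eq_esum do rewrite EFinM.
rewrite esumZl ?invr_ge0 ?(ltW g_gt0)// => [|d]; last by rewrite lee_fin mulr_ge0 ?expR_ge0.
by rewrite [(g^-1 * M)%:E]EFinM lee_wpmul2l// lee_fin invr_ge0 ltW.
Qed.

Let c16 := 16 / g ^+ 2.

Let c16_ge0 : 0 <= c16.
Proof. by rewrite divr_ge0 ?exprn_ge0 ?ltW. Qed.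

Lemma mgf2_le_quadratic b : 0 < b -> b <= g / 2 ->
  (mgf2 mu b + b%:E * mean2_neg mu <=
   1 + b%:E * mean2_pos mu + (b ^+ 2 * (k%:R ^+ 2 + c16 * M))%:E)%E.
Proof.
move=> b0 bg.
pose neg d := if d.2 < 0 then (- d.2)%:~R * mu d else 0.
pose pos d := if 0 < d.2 then d.2%:~R * mu d else 0.
have neg_ge0 d : 0 <= neg d.
  by rewrite /neg; case: ifP => // /ltW d0; rewrite mulr_ge0 ?mu_ge0 // ler0z oppr_ge0.
have pos_ge0 d : 0 <= pos d.
  by rewrite /pos; case: ifP => // /ltW d0; rewrite mulr_ge0 ?mu_ge0 // ler0z.
have pointwise d : ((mu d * expR (b * d.2%:~R) + b * neg d)%:E <=
    (mu d + b * pos d + b ^+ 2 * (k%:R ^+ 2 * mu d + c16 * (mu d * expR (g * d.2%:~R))))%:E)%E.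
  rewrite lee_fin /neg /pos; have [->|/jump2_ge_nz kd] := eqVneq (mu d) 0.
    by rewrite !(mulr0, mul0r, addr0, if_same).
  have := ler_wpM2l (mu_ge0 d) (expR_second_order_le g_gt0 b0 bg kd).
  rewrite ltrz0 ltr0z mulrNz.
  by case: (ltgtP d.2 0) => _; rewrite ?(mulr0, addr0) /c16; nra.
have lhsE : (\esum_(d in [set: int * int]) (mu d * expR (b * d.2%:~R) + b * neg d)%:E =
    mgf2 mu b + b%:E * mean2_neg mu)%E.
  rewrite esumDZl ?(ltW b0)// => [|d]; last by rewrite mulr_ge0 ?mu_ge0 ?expR_ge0.
  by rewrite /mean2_neg esum_mkcondR.
have rhsE : (\esum_(d in [set: int * int]) (mu d + b * pos d + b ^+ 2 *
      (k%:R ^+ 2 * mu d + c16 * (mu d * expR (g * d.2%:~R))))%:E =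
    1 + b%:E * mean2_pos mu + (b ^+ 2)%:E * ((k%:R ^+ 2)%:E + c16%:E * mgf2 mu g))%E.
  have mue_ge0 d : 0 <= mu d * expR (g * d.2%:~R) by rewrite mulr_ge0 ?mu_ge0 ?expR_ge0.
  have k2mu_ge0 d : 0 <= k%:R ^+ 2 * mu d by rewrite mulr_ge0 ?sqr_ge0.
  have tail_ge0 d : 0 <= k%:R ^+ 2 * mu d + c16 * (mu d * expR (g * d.2%:~R)).
    exact: addr_ge0 (k2mu_ge0 d) (mulr_ge0 c16_ge0 (mue_ge0 d)).
  have head_ge0 d : 0 <= mu d + b * pos d.
    exact: addr_ge0 (mu_ge0 d) (mulr_ge0 (ltW b0) (pos_ge0 d)).
  rewrite (esumDZl _ (sqr_ge0 b) head_ge0 tail_ge0) (esumDZl _ (ltW b0) mu_ge0 pos_ge0).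
  rewrite (esumDZl _ c16_ge0 k2mu_ge0 mue_ge0) mu_prob.2 -esum_mkcondR.
  congr (_ + _ * (_ + _))%E.
  by under eq_esum do rewrite EFinM; rewrite esumZl ?sqr_ge0// mu_prob.2 mule1.
rewrite -lhsE; apply: le_trans (le_esum (fun d _ => pointwise d)) _.
rewrite rhsE [(b ^+ 2 * _)%:E]EFinM leeD2l// lee_wpmul2l ?lee_fin ?sqr_ge0//.
by rewrite EFinD leeD2l// [(c16 * M)%:E]EFinM lee_wpmul2l ?lee_fin ?c16_ge0.
Qed.

Lemma mgf2_lt1 : (mean2 mu < 0)%E ->
  exists b eta : R, [/\ 0 < b, b <= g, 0 < eta & (mgf2 mu b <= (1 - eta)%:E)%E].
Proof.
move=> mean_lt0; have {}mean_lt0 : (mean2_pos mu - mean2_neg mu < 0)%E := mean_lt0.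
have M_ge0 : 0 <= M.
  rewrite -lee_fin (le_trans _ mgf2_g_le)// esum_ge0// => d _.
  by rewrite lee_fin mulr_ge0 ?mu_ge0 ?expR_ge0.
have pos_fin : mean2_pos mu \is a fin_num.
  rewrite ge0_fin_numE ?(le_lt_trans mean2_pos_le) ?ltry// esum_ge0// => d /= /ltW d0.
  by rewrite lee_fin mulr_ge0 ?ler0z ?mu_ge0.
have neg_fin : mean2_neg mu \is a fin_num.
  rewrite ge0_fin_numE ?(le_lt_trans mean2_neg_le) ?ltry// esum_ge0// => d /= /ltW d0.
  by rewrite lee_fin mulr_ge0 ?ler0z ?oppr_ge0 ?mu_ge0.
have posE : mean2_pos mu = (fine (mean2_pos mu))%:E by rewrite fineK.
have negE : mean2_neg mu = (fine (mean2_neg mu))%:E by rewrite fineK.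
move: (fine (mean2_pos mu)) (fine (mean2_neg mu)) posE negE => p n posE negE.
have pn : p < n by move: mean_lt0; rewrite posE negE -EFinB lte_fin subr_lt0.
pose K := 1 + k%:R ^+ 2 + c16 * M.
have K_ge1 : 1 <= K.
  by rewrite /K; have := mulr_ge0 c16_ge0 M_ge0; have := sqr_ge0 (k%:R : R); lra.
(* The quadratic term [b^2 K] is then at most half of the linear gain [b (n - p)]. *)
pose b := Num.min (g / 2) ((n - p) / (2 * K)).
have b_gt0 : 0 < b.
  rewrite lt_min; apply/andP; split; first by rewrite divr_gt0.
  by rewrite divr_gt0 ?subr_gt0// mulr_gt0//; lra.
have bg : b <= g / 2 by rewrite ge_min lexx.
have bK : b * K <= (n - p) / 2.
  have K_gt0 : 0 < 2 * K by rewrite mulr_gt0// (lt_le_trans ltr01).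
  have : b * (2 * K) <= n - p by rewrite -ler_pdivlMr// ge_min lexx orbT.
  lra.
exists b, (b * (n - p) / 2); split => //; first lra.
  by rewrite divr_gt0 ?mulr_gt0 ?subr_gt0.
apply: (@le_trans _ _ (1 + b * p + b ^+ 2 * (k%:R ^+ 2 + c16 * M) - b * n)%:E).
  rewrite EFinB leeBrDr// EFinM -negE.
  by apply: le_trans (mgf2_le_quadratic b_gt0 bg) _; rewrite posE -EFinM -!EFinD.
rewrite lee_fin; have := ler_wpM2l (ltW b_gt0) bK; rewrite /K; nra.
Qed.

End SecondCoordinateMgf.

Section JumpMgf.
Variables (R : realType) (P : nat * nat -> nat * nat -> R).
Hypothesis P_ge0 : forall u w, 0 <= P u w.

Definition jump_mgf (a b : R) (u : nat * nat) : \bar R :=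
  \esum_(w in [set: nat * nat])
    (P u w * expR (a * (w.1%:R - u.1%:R) + b * (w.2%:R - u.2%:R)))%:E.

Definition lower_bounded_jumps (k : nat) (u : nat * nat) : Prop :=
  forall w, P u w != 0 -> (u.1 <= w.1 + k)%N /\ (u.2 <= w.2 + k)%N.

Lemma jump_mgf_le_tilt (k : nat) (a a' b b' : R) u :
  lower_bounded_jumps k u -> a <= a' -> b <= b' ->
  (jump_mgf a b u <= (expR ((a' - a) * k%:R + (b' - b) * k%:R))%:E * jump_mgf a' b' u)%E.
Proof.
move=> jumps aa' bb'; rewrite -esumZl ?expR_ge0// => [|w]; last first.
  by rewrite lee_fin mulr_ge0 ?expR_ge0.
apply: le_esum => w _; rewrite -EFinM lee_fin mulrCA.
have [->|/jumps[]] := eqVneq (P u w) 0; first by rewrite !(mul0r, mulr0).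
rewrite -!(ler_nat R) !natrD => le1 le2.
rewrite ler_wpM2l// -expRD ler_expR.
have : 0 <= (a' - a) * (w.1%:R - u.1%:R + k%:R) by rewrite mulr_ge0; lra.
have : 0 <= (b' - b) * (w.2%:R - u.2%:R + k%:R) by rewrite mulr_ge0; lra.
nra.
Qed.

Lemma esum_kernel_expR_affine (a b x y : R) z :
  \esum_(w in [set: nat * nat]) (P z w * expR (a * (w.1%:R - x) + b * (w.2%:R - y)))%:E =
  ((expR (a * (z.1%:R - x) + b * (z.2%:R - y)))%:E * jump_mgf a b z)%E.
Proof.
rewrite -esumZl ?expR_ge0// => [|w]; last by rewrite lee_fin mulr_ge0 ?expR_ge0.
apply: eq_esum => w _; rewrite -EFinM mulrCA -expRD; congr (_ * expR _)%:E; ring.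
Qed.

Lemma prob_YT_lt_tau_le (k0 k l : nat) (a b : R) z :
  (1 <= k0)%N -> 0 <= a ->
  (forall u, (k0 <= u.1)%N -> (k0 <= u.2)%N -> (jump_mgf (- a) b u <= 1)%E) ->
  (prob_YT_lt_tau k0 P k z l <=
   (expR (- a * (z.1%:R - (maxn k0.-1 k)%:R) + b * (z.2%:R - l%:R)))%:E * jump_mgf (- a) b z)%E.
Proof.
move=> k0_ge1 a_ge0 interior; set K := maxn k0.-1 k.
pose h w := expR (- a * (w.1%:R - K%:R) + b * (w.2%:R - l%:R)).
rewrite -esum_kernel_expR_affine; apply: (exit_into_le_superharmonic P_ge0 (h := h)).
- by move=> w; exact: expR_ge0.
- move=> w [wK [w2l _]]; rewrite /h w2l subrr mulr0 addr0.
  have : 0 <= - a * (w.1%:R - K%:R) by rewrite mulNr oppr_ge0 mulr_ge0_le0 // subr_le0 ler_nat.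
  by have := expR_ge1Dx (- a * (w.1%:R - K%:R)); lra.
- by move=> w [Kw _] [wK _]; lia.
- move=> u [Ku k0u]; rewrite esum_kernel_expR_affine.
  rewrite -[X in (_ <= X)%E]mule1 lee_wpmul2l ?lee_fin ?expR_ge0// interior//.
  by rewrite -(prednK k0_ge1) (leq_ltn_trans (leq_maxl _ k)).
Qed.

End JumpMgf.

Section KernelZ.
Variables (R : realType) (k0 : nat) (mu : int * int -> R).
Variables (mu' mu'' : nat -> int * int -> R) (mu2 : nat -> nat -> int * int -> R).
Let P := kernelZ k0 mu mu' mu'' mu2.

Hypothesis mu_prob : is_prob_Z2 mu.
Hypothesis mu'_prob : forall j, (j < k0)%N -> is_prob_Z2 (mu' j).
Hypothesis mu''_prob : forall i, (i < k0)%N -> is_prob_Z2 (mu'' i).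
Hypothesis mu2_prob : forall i j, (i < k0)%N -> (j < k0)%N -> is_prob_Z2 (mu2 i j).

Lemma kernelZ_ge0 u w : 0 <= P u w.
Proof.
rewrite /P /kernelZ.
case: leqP => [k0u1|u1k0]; case: leqP => [k0u2|u2k0] //=.
- exact: mu_prob.1.
- by case: (mu'_prob u2k0).
- by case: (mu''_prob u1k0).
- by case: (mu2_prob u1k0 u2k0).
Qed.

Lemma kernelZ_interior u w : (k0 <= u.1)%N -> (k0 <= u.2)%N ->
  P u w = mu (w.1%:Z - u.1%:Z, w.2%:Z - u.2%:Z).
Proof. by rewrite /P /kernelZ => -> ->. Qed.

Hypothesis A1mu : forall a b : int, a < - k0%:Z \/ b < - k0%:Z -> mu (a, b) = 0.
Hypothesis A1mu' : forall j, (j < k0)%N -> forall a b : int,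
  a < - k0%:Z \/ b < - j%:Z -> mu' j (a, b) = 0.

Lemma kernelZ_lower_bounded_jumps u : (k0 <= u.1)%N -> lower_bounded_jumps P k0 u.
Proof.
move=> k0u1 w; rewrite /P /kernelZ k0u1 /=.
case: leqP => [_|u2k0] /eqP Pnz; split; rewrite leqNgt; apply/negP => lt; apply: Pnz.
- by apply: A1mu; lia.
- by apply: A1mu; lia.
- by apply: (A1mu' u2k0); lia.
- by apply: (A1mu' u2k0); lia.
Qed.

Lemma jump_mgf_kernelZ_tilt (a a' b b' : R) u : (k0 <= u.1)%N -> a <= a' -> b <= b' ->
  (jump_mgf P a b u <=
   (expR ((a' - a) * k0%:R + (b' - b) * k0%:R))%:E * jump_mgf P a' b' u)%E.
Proof. by move=> k0u1; apply: (jump_mgf_le_tilt kernelZ_ge0 (kernelZ_lower_bounded_jumps k0u1)). Qed.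

Lemma jump_mgf_kernelZ_interior b u : (k0 <= u.1)%N -> (k0 <= u.2)%N ->
  jump_mgf P 0 b u = mgf2 mu b.
Proof.
move=> k0u1 k0u2; rewrite /jump_mgf /mgf2.
pose F d := (mu d * expR (b * d.2%:~R))%:E.
transitivity (\esum_(w in [set: nat * nat]) F (w.1%:Z - u.1%:Z, w.2%:Z - u.2%:Z)).
  by apply: eq_esum => w _; rewrite kernelZ_interior// mul0r add0r /F /= intrB.
apply: esum_nat2_shift => [d|[a b'] /= supp]; first by rewrite /F lee_fin mulr_ge0 ?expR_ge0 ?mu_prob.1.
by rewrite /F A1mu ?mul0r//; lia.
Qed.

Lemma jump_mgf_kernelZ_le1 (a b eta : R) u :
  0 <= a -> a * k0%:R = eta -> (mgf2 mu b <= (1 - eta)%:E)%E ->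
  (k0 <= u.1)%N -> (k0 <= u.2)%N -> (jump_mgf P (- a) b u <= 1)%E.
Proof.
move=> a_ge0 ak0 mgf2_b k0u1 k0u2.
have a_le0 : - a <= 0 by rewrite oppr_le0.
apply: le_trans (jump_mgf_kernelZ_tilt k0u1 a_le0 (lexx b)) _.
rewrite jump_mgf_kernelZ_interior// sub0r opprK subrr mul0r addr0 ak0.
apply: le_trans (lee_wpmul2l _ mgf2_b) _; first by rewrite lee_fin expR_ge0.
by rewrite -EFinM lee_fin expR_mul1B_le1.
Qed.

Lemma mgf2_le_jump_mgf_corner (delta gamma : R) : 0 <= delta ->
  (mgf2 mu gamma <= (expR (delta * k0%:R))%:E * jump_mgf P delta gamma (k0, k0))%E.
Proof.
move=> delta_ge0; rewrite -(jump_mgf_kernelZ_interior gamma (u := (k0, k0)))//.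
by apply: le_trans (jump_mgf_kernelZ_tilt _ delta_ge0 (lexx gamma)) _; rewrite ?subr0 ?subrr ?mul0r ?addr0.
Qed.

End KernelZ.

Lemma exponent_le_min (R : realType) (a b x y v k K : R) :
  0 <= b -> 0 <= x -> 0 <= y -> v <= k ->
  - a * (x - K) + b * (v - y) <= a * K + b * k + - Num.min a b * (x + y).
Proof.
move=> b0 x0 y0 vk.
have : 0 <= (a - Num.min a b) * x by rewrite mulr_ge0// subr_ge0 ge_min lexx.
have : 0 <= (b - Num.min a b) * y by rewrite mulr_ge0// subr_ge0 ge_min lexx orbT.
have : 0 <= b * (k - v) by rewrite mulr_ge0// subr_ge0.
lra.
Qed.

Theorem lemma5p12 (R : realType) (k0 : nat) (hk0 : (1 <= k0)%N)
  (mu : int * int -> R) (mu' mu'' : nat -> int * int -> R)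
  (mu2 : nat -> nat -> int * int -> R)
  (* probability measures *)
  (Hmu : is_prob_Z2 mu)
  (Hmu' : forall j, (j < k0)%N -> is_prob_Z2 (mu' j))
  (Hmu'' : forall i, (i < k0)%N -> is_prob_Z2 (mu'' i))
  (Hmu2 : forall i j, (i < k0)%N -> (j < k0)%N -> is_prob_Z2 (mu2 i j))
  (* (A1) *)
  (A1mu : forall a b : int, (a < - k0%:Z) \/ (b < - k0%:Z) -> mu (a, b) = 0)
  (A1mu' : forall j, (j < k0)%N -> forall a b : int,
      (a < - k0%:Z) \/ (b < - j%:Z) -> mu' j (a, b) = 0)
  (A1mu'' : forall i, (i < k0)%N -> forall a b : int,
      (b < - k0%:Z) \/ (a < - i%:Z) -> mu'' i (a, b) = 0)
  (A1mu2 : forall i j, (i < k0)%N -> (j < k0)%N -> forall a b : int,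
      (a < - i%:Z) \/ (b < - j%:Z) -> mu2 i j (a, b) = 0)
  (* (A2) *)
  (A2 : exists (delta gamma C : R), 0 < delta /\ 0 < gamma /\ 0 < C /\
      forall z : nat * nat,
        (\esum_(w in [set: nat * nat])
           ((kernelZ k0 mu mu' mu'' mu2 z w)%:E *
            (expR (delta * (w.1%:R - z.1%:R) + gamma * (w.2%:R - z.2%:R)))%:E)
         <= C%:E)%E)
  (* (A3) *)
  (A3Z0 : irreducible (kernelZ0 mu))
  (A3Z1 : irreducible (kernelZ1 k0 mu mu''))
  (A3Z2 : irreducible (kernelZ2 k0 mu mu'))
  (A3Z : irreducible (kernelZ k0 mu mu' mu'' mu2))
  (* m_2 < 0 *)
  (Hm2 : (mean2 mu < 0)%E) :
  forall k : nat, exists (Ct dt : R), 0 < Ct /\ 0 < dt /\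
    forall (i j l : nat), (k0 <= i)%N -> (j < k0)%N ->
      (prob_YT_lt_tau k0 (kernelZ k0 mu mu' mu'' mu2) k (i, j) l
       <= (Ct * expR (- dt * (i%:R + l%:R)))%:E)%E.

Proof.
move=> k.
have P_ge0 := kernelZ_ge0 Hmu Hmu' Hmu'' Hmu2.
have tilt := jump_mgf_kernelZ_tilt Hmu Hmu' Hmu'' Hmu2 A1mu A1mu'.
case: A2 => delta [gamma [C [delta_gt0 [gamma_gt0 [C_gt0 A2']]]]].
have mgf_le z : (jump_mgf (kernelZ k0 mu mu' mu'' mu2) delta gamma z <= C%:E)%E.
  by rewrite /jump_mgf; under eq_esum do rewrite EFinM; exact: A2'.
have mgf2_gamma : (mgf2 mu gamma <= (expR (delta * k0%:R) * C)%:E)%E.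
  apply: le_trans (mgf2_le_jump_mgf_corner Hmu Hmu' Hmu'' Hmu2 A1mu A1mu' gamma (ltW delta_gt0)) _.
  by rewrite EFinM lee_wpmul2l ?lee_fin ?expR_ge0.
have jump2_ge d : d.2 < - k0%:Z -> mu d = 0 by case: d => ? ? ?; apply: A1mu; right.
have [b [eta [b_gt0 b_le_gamma eta_gt0 mgf2_b]]] := mgf2_lt1 Hmu jump2_ge gamma_gt0 mgf2_gamma Hm2.
pose a := eta / k0%:R.
have a_gt0 : 0 < a by rewrite divr_gt0 ?ltr0n.
have ak0 : a * k0%:R = eta by rewrite /a divfK// lt0r_neq0 ?ltr0n.
have interior u := jump_mgf_kernelZ_le1 Hmu Hmu' Hmu'' Hmu2 A1mu A1mu' (u := u) (ltW a_gt0) ak0 mgf2_b.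
pose c := (delta + a) * k0%:R + (gamma - b) * k0%:R.
exists (expR (a * (maxn k0.-1 k)%:R + b * k0%:R) * (expR c * C)), (Num.min a b).
split; first by rewrite !mulr_gt0 ?expR_gt0.
split; first by rewrite lt_min a_gt0 b_gt0.
move=> i j l k0i jk0.
apply: le_trans (prob_YT_lt_tau_le P_ge0 k l (i, j) hk0 (ltW a_gt0) interior) _.
have a_le_delta : - a <= delta by rewrite (le_trans _ (ltW delta_gt0))// oppr_le0 ltW.
have := tilt _ _ _ _ (i, j) k0i a_le_delta b_le_gamma; rewrite opprK -/c => tilt_ij.
apply: le_trans (lee_wpmul2l _ (le_trans tilt_ij (lee_wpmul2l _ (mgf_le (i, j))))) _.
- by rewrite lee_fin expR_ge0.
- by rewrite lee_fin expR_ge0.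
rewrite -!EFinM lee_fin mulrAC -expRD ler_wpM2r ?mulr_ge0 ?expR_ge0 ?(ltW C_gt0)// ler_expR.
by apply: exponent_le_min; rewrite ?ler0n ?(ltW b_gt0)// ler_nat ltnW.
Qed.
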